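(* In $V_q$ set $x=e_1$, $y=e_2$, $\iota=e_{r-2}$ and $w=\epsilon_2e_{r-3}$. Then $$x^2=y-\epsilon_2=-w^2,\qquad \iota e_n=(-1)^n\epsilon_{n+1}e_{r-2-n}\ (0\le n\le r-2),\qquad \iota^2=-1.$$
   Context: Let $r\ge 5$ and $s$ be coprime odd integers with $0<s<r$, $q=\exp(i\pi s/r)$. For an integer $n$ put $[n]=\frac{q^n-q^{-n}}{q-q^{-1}}$, $[n]!=[n][n-1]\cdots[1]$, and for $1\le n\le r-1$ let $\epsilon_n=\operatorname{sign}[n]=(-1)^{\lfloor ns/r\rfloor}$ (so $\epsilon_1=1$ and $\epsilon_n=\epsilon_{r-n}$). A triple $(i,j,k)\in\{0,\dots,r-2\}^3$ is $r$-admissible if $i\le j+k$, $j\le i+k$, $k\le i+j$, $i+j+k$ is even and $i+j+k\le 2r-4$; for such a triple write $i=b+c$, $j=a+c$, $k=a+b$ and set $\langle i,j,k\rangle=(-1)^{a+b+c}\frac{[a+b+c+1]![a]![b]![c]!}{[a+b]![a+c]![b+c]!}$. Let $V_q$ be the $\mathbb{Q}$-vector space with basis $e_0,\dots,e_{r-2}$, with the symmetric bilinear form $\eta$ for which this basis is orthogonal and $\eta(e_i,e_i)=(-1)^i\epsilon_{i+1}$, and the symmetric trilinear form $\omega$ with $\omega(e_i,e_j,e_k)=\operatorname{sign}\langle i,j,k\rangle$ if $(i,j,k)$ is $r$-admissible and $0$ otherwise. The product on $V_q$ is defined by $\eta(x\cdot y,z)=\omega(x,y,z)$, giving a commutative associative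 unital algebra with unit $e_0=1$. *)

From HB Require Import structures.
From mathcomp Require Import all_boot all_order all_algebra.
From mathcomp Require Import reals trigo.
From mathcomp Require Import complex.
Set Implicit Arguments. Unset Strict Implicit. Unset Printing Implicit Defensive.
Import Order.TTheory GRing.Theory Num.Theory.
Local Open Scope ring_scope.

Section Vq.
Variables (R : realType) (r s : nat).

Definition qpar : R[i] :=
  Complex (cos (pi * s%:R / r%:R)) (sin (pi * s%:R / r%:R)).

Definition qint (n : nat) : R[i] :=
  (qpar ^+ n - qpar ^- n) / (qpar - qpar^-1).

Definition qfact (n : nat) : R[i] := \prod_(1 <= k < n.+1) qint k.

Definition csign (z : R[i]) : rat :=
  if 0 < z then 1 else if z < 0 then -1 else 0.

(* epsilon_n = (-1)^(floor(n s / r)) = sign [n] *)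
Definition eps (n : nat) : rat := (-1) ^+ (n * s %/ r)%N.

Definition admissible (i j k : nat) : bool :=
  [&& i <= r - 2, j <= r - 2, k <= r - 2,
      i <= j + k, j <= i + k, k <= i + j,
      ~~ odd (i + j + k) & i + j + k <= 2 * r - 4]%N.

Definition theta (i j k : nat) : R[i] :=
  let a := ((j + k - i) %/ 2)%N in
  let b := ((i + k - j) %/ 2)%N in
  let c := ((i + j - k) %/ 2)%N in
  (-1) ^+ (a + b + c)%N *
  (qfact (a + b + c + 1)%N * qfact a * qfact b * qfact c) /
  (qfact (a + b)%N * qfact (a + c)%N * qfact (b + c)%N).

(* the algebra V_q: vectors indexed by e_0, ..., e_(r-2) *)
Definition Vq := 'rV[rat]_(r - 1)%N.

Definition e (n : nat) : Vq := \row_(k < (r - 1)%N) (if (k : nat) == n then 1 else 0).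

Definition eta_d (i : nat) : rat := (-1) ^+ i * eps i.+1.

Definition eta (x y : Vq) : rat := \sum_(k < (r - 1)%N) x 0 k * y 0 k * eta_d k.

Definition omega_b (i j k : nat) : rat :=
  if admissible i j k then csign (theta i j k) else 0.

Definition omega (x y z : Vq) : rat :=
  \sum_(i < (r - 1)%N) \sum_(j < (r - 1)%N) \sum_(k < (r - 1)%N)
     x 0 i * y 0 j * z 0 k * omega_b i j k.

(* product determined by eta(x.y, z) = omega(x, y, z) (eta is diagonal, nondegenerate):
   the e_k-coordinate of x.y is omega(x, y, e_k) / eta(e_k, e_k). *)
Definition vmul (x y : Vq) : Vq :=
  \row_(k < (r - 1)%N) (omega x y (e k) / eta_d k).

End Vq.

Arguments vmul R r s x y : clear implicits.
Arguments omega R r s x y z : clear implicits.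
Arguments eta r s x y : clear implicits.

From HB Require Import structures.
From mathcomp Require Import all_boot all_order all_algebra.
From mathcomp Require Import reals trigo.
From mathcomp Require Import complex.
From mathcomp Require Import ring zify.
Set Implicit Arguments. Unset Strict Implicit. Unset Printing Implicit Defensive.
Import Order.TTheory GRing.Theory Num.Theory.
Local Open Scope ring_scope.
Local Open Scope complex_scope.

(* With th = pi s / r the quantum integer [n] is the real number
   sin (n th) / sin th.  Writing n s = q r + t, coprimality gives 0 < t < r, so
   sin (n th) = (-1)^q sin (pi t / r) and sign [n] = (-1)^q = eps_n.  Hence the sign of
   every <i,j,k> is a product of signs (-1) and eps's.  The products in question only
   involve triples with a = 0, where <b+c,c,b> = (-1)^(b+c) [b+c+1], or with a = b = 1;
   the identities then follow from eps_n^2 = 1, eps_1 = 1 and the symmetry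
   [r-n] = [n] (s odd), which also gives eta(e_(r-2-n)) = - eta(e_n) (r odd). *)

Section Cis.
Variable R : realType.

Lemma cisX (a : R) n :
  Complex (cos a) (sin a) ^+ n = Complex (cos (n%:R * a)) (sin (n%:R * a)).
Proof.
elim: n => [|n IHn]; first by rewrite mul0r cos0 sin0.
rewrite exprSr IHn -addn1 natrD mulrDl mul1r cosD sinD.
by congr Complex; rewrite addrC.
Qed.

Lemma cisV (a : R) : (Complex (cos a) (sin a))^-1 = Complex (cos (- a)) (sin (- a)).
Proof.
apply: mulr1_eq; apply/eqP; rewrite cosN sinN eq_complex /=.
by rewrite mulrN opprK -!expr2 cos2Dsin2 mulrN mulrC addNr !eqxx.
Qed.

End Cis.

(* [csign] is [rat]-valued, so signs of reals are computed through [sgz]. *)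
Definition sgq {R : realDomainType} (x : R) : rat := (sgz x)%:~R.

Section Sign.
Variable R : realDomainType.
Implicit Types x y : R.

Lemma sgqM x y : sgq (x * y) = sgq x * sgq y.
Proof. by rewrite /sgq sgzM rmorphM. Qed.

Lemma sgqV (F : realFieldType) (x : F) : sgq x^-1 = sgq x.
Proof. by rewrite /sgq -sgz_sgr sgrV sgz_sgr. Qed.

Lemma sgq_sign n : sgq ((-1) ^+ n : R) = (-1) ^+ n.
Proof. by rewrite /sgq sgzX sgzN1 rmorphXn rmorphN1. Qed.

Lemma sgq_gt0 x : 0 < x -> sgq x = 1.
Proof. by move=> x_gt0; rewrite /sgq gtr0_sgz. Qed.

End Sign.

Lemma csign_real (R : realType) (x : R) : csign x%:C = sgq x.
Proof.
rewrite /csign /sgq -(rmorph0 (real_complex R)) !ltcR.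
have [x_lt0|x_gt0|->] := ltrgtP x 0.
- by rewrite ltr0_sgz.
- by rewrite gtr0_sgz.
- by rewrite sgz0.
Qed.

Lemma coprime_modn_gt0 r s n : coprime r s -> (0 < n < r)%N -> (0 < n * s %% r)%N.
Proof.
move=> r_s_coprime /andP[n_gt0 n_lt_r]; rewrite lt0n.
apply: contraTneq n_lt_r => /eqP ns_mod.
have : (r %| n * s)%N by rewrite /dvdn ns_mod.
by rewrite Gauss_dvdl // => /(dvdn_leq n_gt0); rewrite leqNgt.
Qed.

Lemma omega_scale_e (R : realType) r s c1 c2 a b k :
  (a < r - 1)%N -> (b < r - 1)%N -> (k < r - 1)%N ->
  omega R r s (c1 *: e r a) (c2 *: e r b) (e r k) = c1 * c2 * omega_b R r s a b k.
Proof.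
move=> a_lt b_lt k_lt.
have e_off n (i : 'I_(r - 1)) (n_lt : (n < r - 1)%N) :
  i != Ordinal n_lt -> e r n 0 i = 0 by rewrite -val_eqE mxE => /negbTE ->.
rewrite /omega (big_only1 (Ordinal a_lt)) // => [|i /e_off i_off _]; last first.
  by apply: big1 => j _; apply: big1 => l _; rewrite mxE i_off !(mulr0, mul0r).
rewrite (big_only1 (Ordinal b_lt)) // => [|j /e_off j_off _]; last first.
  by apply: big1 => l _; rewrite [_ j]mxE j_off !(mulr0, mul0r).
rewrite (big_only1 (Ordinal k_lt)) // => [|l /e_off l_off _]; last first.
  by rewrite l_off !(mulr0, mul0r).
by rewrite !mxE /= !eqxx !mulr1.
Qed.

Lemma vmul_scale_e (R : realType) r s c1 c2 a b (k : 'I_(r - 1)) :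
  (a < r - 1)%N -> (b < r - 1)%N ->
  vmul R r s (c1 *: e r a) (c2 *: e r b) 0 k = c1 * c2 * omega_b R r s a b k / eta_d r s k.
Proof. by move=> a_lt b_lt; rewrite mxE omega_scale_e. Qed.

Section ProductTable.
Variables (R : realType) (r s : nat).
Hypotheses (r_ge5 : (5 <= r)%N) (r_odd : odd r) (s_gt0 : (0 < s)%N) (s_lt_r : (s < r)%N)
  (s_odd : odd s) (r_s_coprime : coprime r s).

Let r_gt0 : (0 < r)%N. Proof. exact: leq_ltn_trans s_lt_r. Qed.

Lemma eps1 : eps r s 1 = 1.
Proof. by rewrite /eps mul1n divn_small. Qed.

Lemma eps_sym n : (0 < n < r)%N -> eps r s (r - n) = eps r s n.
Proof.
move=> n_range.
have t_gt0 := coprime_modn_gt0 r_s_coprime n_range.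
have t_lt_r : (n * s %% r < r)%N by rewrite ltn_pmod.
have q_lt_s : (n * s %/ r < s)%N.
  by rewrite ltn_divLR // mulnC ltn_pmul2l ?odd_gt0; case/andP: n_range.
rewrite /eps; have -> : ((r - n) * s %/ r = s - (n * s %/ r).+1)%N.
  have ns_eq := divn_eq (n * s) r.
  have -> : ((r - n) * s = (s - (n * s %/ r).+1) * r + (r - n * s %% r))%N by nia.
  by rewrite divnMDl // [((r - _) %/ r)%N]divn_small ?addn0 //; lia.
by rewrite -signr_odd oddB // s_odd /= negbK signr_odd.
Qed.

Lemma eps_sqr n : eps r s n * eps r s n = 1.
Proof. by rewrite -expr2 sqrr_sign. Qed.

Lemma eps_neq0 n : eps r s n != 0.
Proof. by rewrite /eps signr_eq0. Qed.

Lemma sin_pi_frac_gt0 t : (0 < t < r)%N -> 0 < sin (pi * t%:R / r%:R : R).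
Proof.
case/andP=> t_gt0 t_lt_r; apply: sin_gt0_pi.
rewrite divr_gt0 ?mulr_gt0 ?pi_gt0 ?ltr0n //=.
by rewrite ltr_pdivrMr ?ltr0n // ltr_pM2l ?pi_gt0 ?ltr_nat.
Qed.

Let th : R := pi * s%:R / r%:R.

Let sin_th_gt0 : 0 < sin th.
Proof. by apply: sin_pi_frac_gt0; rewrite s_gt0 s_lt_r. Qed.

Definition qintR n : R := sin (n%:R * th) / sin th.

Lemma qint_real n : qint R r s n = (qintR n)%:C.
Proof.
have sin_th_neq0 : sin th != 0 by rewrite gt_eqF ?sin_th_gt0.
have den_neq0 : qpar R r s - (qpar R r s)^-1 != 0.
  rewrite /qpar cisV cosN sinN eq_complex /= opprK -mulr2n mulrn_eq0 -/th.
  by rewrite (negbTE sin_th_neq0) /= andbF.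
rewrite /qint; apply: (canLR (mulfK den_neq0)); rewrite -exprVn /qpar cisV !cisX.
rewrite !mulrN !cosN !sinN /qintR -/th; apply/eqP; rewrite eq_complex /=.
by rewrite !subrr !opprK !(mul0r, mulr0, subr0, addr0) eqxx mulrDr divfK ?eqxx.
Qed.

Lemma qintR1 : qintR 1 = 1.
Proof. by rewrite /qintR mul1r divff // gt_eqF. Qed.

Lemma qintR_sym n : (n <= r)%N -> qintR (r - n) = qintR n.
Proof.
move=> n_le_r; have r_neq0 : r%:R != 0 :> R by rewrite pnatr_eq0 -lt0n.
rewrite /qintR; have -> : (r - n)%:R * th = - (n%:R * th) + pi *+ s.
  by rewrite natrB // /th -mulr_natr; field.
by rewrite (alternatingn (@sinDpi R)) sinN -signr_odd s_odd mulN1r opprK.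
Qed.

Lemma sin_mul_th n :
  sin (n%:R * th) = (-1) ^+ (n * s %/ r) * sin (pi * (n * s %% r)%:R / r%:R).
Proof.
have r_neq0 : r%:R != 0 :> R by rewrite pnatr_eq0 -lt0n.
have -> : n%:R * th = pi * (n * s %% r)%:R / r%:R + pi *+ (n * s %/ r).
  have rem_eq : (n * s %% r)%:R = n%:R * s%:R - (n * s %/ r)%:R * r%:R :> R.
    by rewrite -!natrM -natrB ?leq_divM // {2}(divn_eq (n * s) r) addKn.
  by rewrite /th -mulr_natr rem_eq; field.
by rewrite (alternatingn (@sinDpi R)).
Qed.

Lemma sgq_qintR n : (0 < n < r)%N -> sgq (qintR n) = eps r s n.
Proof.
case/andP=> n_gt0 n_lt_r.
have sin_rem_gt0 : 0 < sin (pi * (n * s %% r)%:R / r%:R : R).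
  by rewrite sin_pi_frac_gt0 // coprime_modn_gt0 ?n_gt0 // ltn_pmod.
by rewrite /qintR sin_mul_th sgqM sgqV sgqM sgq_sign !sgq_gt0 ?mulr1.
Qed.

Lemma qintR_neq0 n : (0 < n < r)%N -> qintR n != 0.
Proof.
move=> n_range; apply/eqP => qn0; have := sgq_qintR n_range.
by rewrite qn0 /sgq sgz0 /eps => /esym/eqP; rewrite signr_eq0.
Qed.

Definition qfactR n : R := \prod_(1 <= k < n.+1) qintR k.

Lemma qfactR0 : qfactR 0 = 1.
Proof. by rewrite /qfactR big_geq. Qed.

Lemma qfactRS n : qfactR n.+1 = qfactR n * qintR n.+1.
Proof. by rewrite /qfactR big_nat_recr. Qed.

Lemma qfactR_neq0 n : (n < r)%N -> qfactR n != 0.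
Proof.
elim: n => [|n IHn] n_lt_r; first by rewrite qfactR0 oner_eq0.
by rewrite qfactRS mulf_neq0 ?IHn ?qintR_neq0 // ltnW.
Qed.

Lemma qfact_real n : qfact R r s n = (qfactR n)%:C.
Proof. by rewrite /qfact /qfactR rmorph_prod; apply: eq_bigr => k _; rewrite qint_real. Qed.

Lemma thetaE a b c i j k : i = (b + c)%N -> j = (a + c)%N -> k = (a + b)%N ->
  theta R r s i j k =
  ((-1) ^+ (a + b + c) * (qfactR (a + b + c + 1) * qfactR a * qfactR b * qfactR c)
   / (qfactR (a + b) * qfactR (a + c) * qfactR (b + c)))%:C.
Proof.
move=> -> -> ->; rewrite /theta.
have -> : ((a + c + (a + b) - (b + c)) %/ 2 = a)%N by lia.
have -> : ((b + c + (a + b) - (a + c)) %/ 2 = b)%N by lia.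
have -> : ((b + c + (a + c) - (a + b)) %/ 2 = c)%N by lia.
by rewrite !qfact_real !rmorphM fmorphV !rmorphM rmorphXn rmorphN1.
Qed.

Lemma theta_sub i j : (j <= i)%N -> (i.+1 < r)%N ->
  theta R r s i j (i - j) = ((-1) ^+ i * qintR i.+1)%:C.
Proof.
move=> j_le_i i_lt_r; rewrite (@thetaE 0 (i - j) j) ?add0n ?subnK //.
rewrite addn1 qfactRS qfactR0; congr (_%:C); field.
by rewrite !qfactR_neq0 //; lia.
Qed.

Lemma theta_diag_two c : (c.+3 < r)%N ->
  theta R r s c.+1 c.+1 2 =
  ((-1) ^+ c * (qintR c.+3 * qintR c.+2) / (qintR 2 * qintR c.+1))%:C.
Proof.
move=> c_lt_r; rewrite (@thetaE 1 1 c) // !add1n addn1 !qfactRS qfactR0 qintR1.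
rewrite exprS exprS mulN1r mulN1r opprK; congr (_%:C); field.
by rewrite !qfactR_neq0 ?qintR_neq0 //; lia.
Qed.

Lemma omega_b_sub i j : (j <= i)%N -> (i.+1 < r)%N ->
  omega_b R r s i j (i - j) = (-1) ^+ i * eps r s i.+1.
Proof.
move=> j_le_i i_lt_r; rewrite /omega_b ifT; last by rewrite /admissible; lia.
by rewrite theta_sub // csign_real sgqM sgq_sign sgq_qintR ?i_lt_r.
Qed.

Lemma omega_b_diag_two c : (c.+3 < r)%N ->
  omega_b R r s c.+1 c.+1 2 =
  (-1) ^+ c * (eps r s c.+3 * eps r s c.+2) * (eps r s 2 * eps r s c.+1).
Proof.
move=> c_lt_r; rewrite /omega_b ifT; last by rewrite /admissible; lia.
rewrite theta_diag_two // csign_real sgqM sgqV sgqM sgq_sign.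
by rewrite !(@sgqM _ (qintR _)) !sgq_qintR //; lia.
Qed.

Lemma eta_d0 : eta_d r s 0 = 1.
Proof. by rewrite /eta_d expr0 mul1r eps1. Qed.

Lemma invr_eta_d n : (eta_d r s n)^-1 = eta_d r s n.
Proof. by rewrite /eta_d /eps -exprD invr_sign. Qed.

Lemma sign_rsub k : (k <= r)%N -> (-1) ^+ (r - k) = - (-1) ^+ k :> rat.
Proof. by move=> k_le_r; rewrite -signr_odd oddB // r_odd signrN signr_odd. Qed.

Lemma eta_d_sym n : (n <= r - 2)%N -> eta_d r s (r - 2 - n) = - eta_d r s n.
Proof.
move=> n_le; rewrite /eta_d (_ : (r - 2 - n).+1 = r - n.+1)%N; last lia.
rewrite eps_sym //; last lia.
rewrite -subnDA sign_rsub; last lia.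
by rewrite exprD expr2 mulN1r opprK mul1r mulNr.
Qed.

Lemma vmul_e1_e1 : vmul R r s (e r 1) (e r 1) = e r 2 - eps r s 2 *: e r 0.
Proof.
apply/rowP => k; rewrite -[e r 1]scale1r vmul_scale_e ?mul1r; try lia.
rewrite !mxE; case: k => [[|[|[|k]]] k_lt] /=.
- rewrite (omega_b_sub (i:=1%N) (j:=1%N)) //; last lia.
  by rewrite eta_d0 divr1 expr1 mulN1r sub0r mulr1.
- by rewrite /omega_b ifF ?mul0r ?mulr0 ?subr0 //; rewrite /admissible; lia.
- rewrite (omega_b_diag_two (c:=0%N)); last lia.
  rewrite eps1 // expr0 !mulr1 mul1r /eta_d expr2 mulN1r opprK mul1r.
  by rewrite -(mulrA (eps r s 3)) eps_sqr mulr1 divff ?eps_neq0 // mulr0 subr0.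
- by rewrite /omega_b ifF ?mul0r ?mulr0 ?subr0 //; rewrite /admissible; lia.
Qed.

Lemma vmul_w_w :
  vmul R r s (eps r s 2 *: e r (r - 3)) (eps r s 2 *: e r (r - 3)) =
  eps r s 2 *: e r 0 - e r 2.
Proof.
apply/rowP => k; rewrite vmul_scale_e; try lia.
rewrite !mxE eps_sqr mul1r; case: k => [[|[|[|k]]] k_lt] /=.
- have := omega_b_sub (leqnn (r - 3)); rewrite subnn => -> //; last lia.
  rewrite sign_rsub; last lia.
  rewrite (_ : (r - 3).+1 = r - 2)%N; last lia.
  rewrite eps_sym //; last lia.
  by rewrite eta_d0 divr1 -signr_odd /= expr1 opprK mul1r mulr1 subr0.
- by rewrite /omega_b ifF ?mul0r ?mulr0 ?subr0 ?subrr //; rewrite /admissible; lia.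
- rewrite (_ : r - 3 = (r - 4).+1)%N; last lia.
  rewrite omega_b_diag_two; last lia.
  rewrite (_ : (r - 4).+3 = r - 1)%N; last lia.
  rewrite (_ : (r - 4).+2 = r - 2)%N; last lia.
  rewrite (_ : (r - 4).+1 = r - 3)%N; last lia.
  rewrite sign_rsub ?(eps_sym (n := 1%N)) ?(eps_sym (n := 2%N)) ?(eps_sym (n := 3%N)); try lia.
  rewrite eps1 // -signr_odd /= expr0 mulN1r !mul1r mulNr mulrA eps_sqr mul1r mulNr.
  by rewrite /eta_d expr2 mulN1r opprK mul1r divff ?eps_neq0 // mulr0 sub0r.
- by rewrite /omega_b ifF ?mul0r ?mulr0 ?subr0 ?subrr //; rewrite /admissible; lia.
Qed.

Lemma vmul_iota_e n : (n <= r - 2)%N ->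
  vmul R r s (e r (r - 2)) (e r n) = eta_d r s n *: e r (r - 2 - n).
Proof.
move=> n_le; apply/rowP => k.
rewrite -[e r (r - 2)]scale1r -[e r n]scale1r vmul_scale_e ?mul1r; try lia.
rewrite !mxE; case: (eqVneq (k : nat) (r - 2 - n)%N) => [-> | k_neq].
- rewrite omega_b_sub //; last lia.
  rewrite (_ : (r - 2).+1 = r - 1)%N; last lia.
  rewrite eta_d_sym // sign_rsub ?(eps_sym (n := 1%N)) ?eps1 //; try lia.
  by rewrite expr2 mulN1r opprK mulr1 invrN mulr1 mulN1r opprK invr_eta_d.
- by rewrite mulr0 /omega_b ifF ?mul0r //; rewrite /admissible; lia.
Qed.

Lemma vmul_iota_iota : vmul R r s (e r (r - 2)) (e r (r - 2)) = - e r 0.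
Proof.
rewrite vmul_iota_e // subnn -[X in eta_d r s X](subn0 (r - 2)%N) eta_d_sym //.
by rewrite eta_d0 scaleN1r.
Qed.

End ProductTable.

Theorem mainTheorem5 (R : realType) (r s : nat) :
  (5 <= r)%N -> odd r -> odd s -> coprime r s -> (0 < s)%N -> (s < r)%N ->
  let x := e r 1 in
  let y := e r 2 in
  let iota := e r (r - 2) in
  let w := eps r s 2 *: e r (r - 3) in
  vmul R r s x x = y - eps r s 2 *: e r 0 /\
  vmul R r s x x = - vmul R r s w w /\
  (forall n : nat, (n <= r - 2)%N ->
     vmul R r s iota (e r n) = ((-1) ^+ n * eps r s n.+1) *: e r (r - 2 - n)) /\
  vmul R r s iota iota = - e r 0.
Proof.
move=> r_ge5 r_odd s_odd r_s_coprime s_gt0 s_lt_r x y iota w.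
split; first by rewrite vmul_e1_e1.
split; first by rewrite vmul_e1_e1 // vmul_w_w // opprB.
split; first by move=> n n_le; rewrite vmul_iota_e.
by rewrite vmul_iota_iota.
Qed.
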